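(* Define $\tau,\tau^<\colon\mathbb{D}([0,\infty),\mathbb{R})\to[0,\infty]$ by $\tau(f)=\inf\{t\ge0\colon f(t)\le0\}$ and $\tau^<(f)=\inf\{t\ge0\colon f(t)<0\}$. Let $C([0,\infty),\mathbb{R})$ be the set of continuous $f\in\mathbb{D}([0,\infty),\mathbb{R})$ and $$\mathbb{D}^*([0,\infty),\mathbb{R})=\big\{f\in\mathbb{D}([0,\infty),\mathbb{R})\colon f(t)\le0\ \forall t\ge\tau(f),\ \tau^<(f)=\tau(f)<\infty\big\}.$$ If $f_n\to f$ in $\mathbb{D}([0,\infty),\mathbb{R})$ (Skorokhod topology) and $f\in C([0,\infty),\mathbb{R})\cap\mathbb{D}^*([0,\infty),\mathbb{R})$, then $\tau(f_n)\to\tau(f)$.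
   Context: $\mathbb{D}([0,\infty),\mathbb{R})$ is the space of càdlàg functions $[0,\infty)\to\mathbb{R}$ with the Skorokhod ($J_1$) topology, $\inf\varnothing=\infty$. *)

From Stdlib Require Import Reals.
From Coquelicot Require Import Coquelicot.
Open Scope R_scope.

(* Paths are modelled as f : R -> R; only the values on [0,oo) matter. *)

Definition right_cont_nonneg (f : R -> R) : Prop :=
  forall t, 0 <= t -> forall eps, 0 < eps -> exists delta, 0 < delta /\
    forall s, t <= s < t + delta -> Rabs (f s - f t) < eps.

Definition left_limits (f : R -> R) : Prop :=
  forall t, 0 < t -> exists l : R, forall eps, 0 < eps -> exists delta, 0 < delta /\
    forall s, 0 <= s -> t - delta < s < t -> Rabs (f s - l) < eps.

Definition cadlag (f : R -> R) : Prop := right_cont_nonneg f /\ left_limits f.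

Definition cont_nonneg (f : R -> R) : Prop :=
  forall t, 0 <= t -> forall eps, 0 < eps -> exists delta, 0 < delta /\
    forall s, 0 <= s -> Rabs (s - t) < delta -> Rabs (f s - f t) < eps.

Definition time_change (lam : R -> R) : Prop :=
  cont_nonneg lam /\
  (forall s t, 0 <= s -> s < t -> lam s < lam t) /\
  (forall t, 0 <= t -> 0 <= lam t) /\
  (forall u, 0 <= u -> exists t, 0 <= t /\ lam t = u).

(* Skorokhod J1 convergence in D([0,oo),R) (Billingsley, Thm 16.2):
   there exist lam_n in Lambda_oo with sup_t |lam_n t - t| -> 0 and
   sup_{t <= T} |f_n (lam_n t) - f t| -> 0 for every T. *)
Definition skorokhod_cvg (fs : nat -> R -> R) (f : R -> R) : Prop :=
  exists lams : nat -> R -> R,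
    (forall n, time_change (lams n)) /\
    (forall eps, 0 < eps -> exists N, forall n, (N <= n)%nat ->
        forall t, 0 <= t -> Rabs (lams n t - t) <= eps) /\
    (forall T, 0 <= T -> forall eps, 0 < eps -> exists N, forall n, (N <= n)%nat ->
        forall t, 0 <= t <= T -> Rabs (fs n (lams n t) - f t) <= eps).

(* tau(f) = inf {t >= 0 | f t <= 0}, tau^<(f) = inf {t >= 0 | f t < 0}, inf of empty = +oo *)
Definition tau (f : R -> R) : Rbar := Glb_Rbar (fun t => 0 <= t /\ f t <= 0).
Definition tau_lt (f : R -> R) : Rbar := Glb_Rbar (fun t => 0 <= t /\ f t < 0).

Definition Dstar (f : R -> R) : Prop :=
  cadlag f /\
  (forall t, 0 <= t -> Rbar_le (tau f) (Finite t) -> f t <= 0) /\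
  tau_lt f = tau f /\ Rbar_lt (tau f) p_infty.

Definition Rbar_seq_cvg (u : nat -> Rbar) (l : Rbar) : Prop :=
  match l with
  | Finite x => forall eps, 0 < eps -> exists N, forall n, (N <= n)%nat ->
        Rbar_lt (Finite (x - eps)) (u n) /\ Rbar_lt (u n) (Finite (x + eps))
  | p_infty => forall M : R, exists N, forall n, (N <= n)%nat -> Rbar_lt (Finite M) (u n)
  | m_infty => forall M : R, exists N, forall n, (N <= n)%nat -> Rbar_lt (u n) (Finite M)
  end.

From Stdlib Require Import Reals Lra Lia Classical.
From Coquelicot Require Import Coquelicot.
Open Scope R_scope.

(* Upper bound: [tau^<(f) = tau(f)] supplies points [t] just beyond [tau(f)]
   with [f t < 0]; uniform convergence along the time changes makes
   [f_n (lam_n t)] negative too, and [lam_n t] is close to [t].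
   Lower bound: by continuity, [f] has a positive minimum [m] on [[0, S]] for
   any [S < tau(f)]; eventually [f_n o lam_n > m/2] on [[0, S]], and since
   [lam_n] is onto and close to the identity, [f_n > 0] on [[0, S - eps]]. *)

Lemma Glb_Rbar_le (E : R -> Prop) (x : R) : E x -> Rbar_le (Glb_Rbar E) x.
Proof. intros Ex. apply (proj1 (Glb_Rbar_correct E)), Ex. Qed.

Lemma Glb_Rbar_ge (E : R -> Prop) (b : R) :
  (forall x, E x -> b <= x) -> Rbar_le b (Glb_Rbar E).
Proof. intros Hb. apply (proj2 (Glb_Rbar_correct E)). exact Hb. Qed.

Lemma Glb_Rbar_lt_witness (E : R -> Prop) (x : R) :
  Rbar_lt (Glb_Rbar E) x -> exists t, E t /\ t < x.
Proof.
  intros Hlt. apply NNPP. intros Hno.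
  assert (Hge : Rbar_le x (Glb_Rbar E)).
  { apply Glb_Rbar_ge. intros t Et. apply Rnot_lt_le. intros Htx. apply Hno. eauto. }
  exact (Rbar_lt_not_le _ _ Hlt Hge).
Qed.

Lemma tau_nonneg (g : R -> R) : Rbar_le 0 (tau g).
Proof. apply Glb_Rbar_ge. intros x [Hx _]. exact Hx. Qed.

Lemma tau_le (g : R -> R) (t : R) : 0 <= t -> g t <= 0 -> Rbar_le (tau g) t.
Proof. intros Ht Hg. apply Glb_Rbar_le. split; assumption. Qed.

Lemma pos_lt_tau (g : R -> R) (t : R) : 0 <= t -> Rbar_lt t (tau g) -> 0 < g t.
Proof.
  intros Ht Hlt. apply Rnot_le_lt. intros Hg.
  exact (Rbar_lt_not_le _ _ Hlt (tau_le g t Ht Hg)).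
Qed.

(* [continuity_pt] at [0] asks for two-sided continuity, while [cont_nonneg]
   only controls [f] on [[0, oo)]; composing with [Rabs] bridges the gap. *)
Lemma continuity_pt_comp_Rabs (f : R -> R) (c : R) :
  cont_nonneg f -> continuity_pt (fun x => f (Rabs x)) c.
Proof.
  intros Hf eps Heps.
  destruct (Hf (Rabs c) (Rabs_pos c) eps Heps) as [d [Hd Hclose]].
  exists d. split; [exact Hd|]. intros x [_ Hx].
  apply Hclose; [apply Rabs_pos|].
  eapply Rle_lt_trans; [apply Rabs_triang_inv2|exact Hx].
Qed.

Lemma cont_nonneg_pos_lower_bound (f : R -> R) (S : R) :
  cont_nonneg f -> 0 <= S -> (forall t, 0 <= t <= S -> 0 < f t) ->
  exists m, 0 < m /\ forall t, 0 <= t <= S -> m <= f t.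
Proof.
  intros Hf HS Hpos.
  destruct (continuity_ab_min (fun x => f (Rabs x)) 0 S HS
              (fun c _ => continuity_pt_comp_Rabs f c Hf)) as [mx [Hmin Hmx]].
  exists (f mx). split; [apply Hpos; exact Hmx|].
  intros t Ht. specialize (Hmin t Ht). simpl in Hmin.
  rewrite !Rabs_pos_eq in Hmin by lra. exact Hmin.
Qed.

Section Skorokhod_hitting_time.

Variables (fs : nat -> R -> R) (f : R -> R).
Hypothesis Hcvg : skorokhod_cvg fs f.

Lemma tau_eventually_lt (t eps : R) :
  0 <= t -> f t < 0 -> 0 < eps ->
  exists N, forall n, (N <= n)%nat -> Rbar_lt (tau (fs n)) (t + eps).
Proof.
  intros Ht Hft Heps. destruct Hcvg as [lams [Htc [Hlam Hunif]]].
  destruct (Hunif t Ht (- f t / 2)) as [N1 HN1]; [lra|].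
  destruct (Hlam (eps / 2)) as [N2 HN2]; [lra|].
  exists (Nat.max N1 N2). intros n Hn.
  assert (Hval := HN1 n ltac:(lia) t (conj Ht (Rle_refl t))).
  assert (Htime := HN2 n ltac:(lia) t Ht).
  apply Rabs_le_between in Hval, Htime.
  destruct (Htc n) as [_ [_ [Hnonneg _]]].
  apply Rbar_le_lt_trans with (lams n t).
  - apply tau_le; [apply Hnonneg, Ht|lra].
  - simpl. lra.
Qed.

Lemma tau_eventually_ge (S eps : R) :
  cont_nonneg f -> 0 <= S -> (forall t, 0 <= t <= S -> 0 < f t) -> 0 < eps ->
  exists N, forall n, (N <= n)%nat -> Rbar_le (S - eps) (tau (fs n)).
Proof.
  intros Hf HS Hpos Heps. destruct Hcvg as [lams [Htc [Hlam Hunif]]].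
  destruct (cont_nonneg_pos_lower_bound f S Hf HS Hpos) as [m [Hm Hmin]].
  destruct (Hunif S HS (m / 2)) as [N1 HN1]; [lra|].
  destruct (Hlam eps Heps) as [N2 HN2].
  exists (Nat.max N1 N2). intros n Hn.
  apply Glb_Rbar_ge. intros s [Hs Hfs].
  apply Rnot_lt_le. intros HsS.
  destruct (Htc n) as [_ [_ [_ Honto]]].
  destruct (Honto s Hs) as [t [Ht Hts]].
  assert (Htime := HN2 n ltac:(lia) t Ht). apply Rabs_le_between in Htime.
  assert (HtS : 0 <= t <= S) by lra.
  assert (Hval := HN1 n ltac:(lia) t HtS). apply Rabs_le_between in Hval.
  specialize (Hmin t HtS). rewrite Hts in Hval. lra.
Qed.

End Skorokhod_hitting_time.

Theorem lemma3p3 (fs : nat -> R -> R) (f : R -> R) :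
  (forall n, cadlag (fs n)) -> cadlag f ->
  skorokhod_cvg fs f ->
  cont_nonneg f -> Dstar f ->
  Rbar_seq_cvg (fun n => tau (fs n)) (tau f).
Proof.
  intros _ _ Hcvg Hf [_ [_ [Htau_lt Hfin]]].
  pose proof (tau_nonneg f) as Htau0.
  destruct (tau f) as [T| |] eqn:ET; simpl in Hfin, Htau0; try contradiction.
  intros eps Heps.
  assert (Hup : exists N, forall n, (N <= n)%nat -> Rbar_lt (tau (fs n)) (T + eps)).
  { assert (Hlt : Rbar_lt (tau_lt f) (T + eps / 2)) by (rewrite Htau_lt; simpl; lra).
    destruct (Glb_Rbar_lt_witness _ _ Hlt) as [t [[Ht Hft] HtT]].
    destruct (tau_eventually_lt fs f Hcvg t (eps / 2) Ht Hft) as [N HN]; [lra|].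
    exists N. intros n Hn. eapply Rbar_lt_le_trans; [apply HN, Hn|]. simpl. lra. }
  assert (Hlo : exists N, forall n, (N <= n)%nat -> Rbar_lt (T - eps) (tau (fs n))).
  { destruct (Rlt_or_le (T - eps / 2) 0) as [Hneg|HS].
    - exists 0%nat. intros n _.
      eapply Rbar_lt_le_trans; [|apply tau_nonneg]. simpl. lra.
    - assert (Hpos : forall t, 0 <= t <= T - eps / 2 -> 0 < f t).
      { intros t Ht. apply pos_lt_tau; [lra|]. rewrite ET. simpl. lra. }
      destruct (tau_eventually_ge fs f Hcvg (T - eps / 2) (eps / 4) Hf HS Hpos)
        as [N HN]; [lra|].
      exists N. intros n Hn. eapply Rbar_lt_le_trans; [|apply HN, Hn]. simpl. lra. }
  destruct Hup as [N1 HN1], Hlo as [N2 HN2].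
  exists (Nat.max N1 N2). intros n Hn. split; [apply HN2|apply HN1]; lia.
Qed.
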